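(* In the setting of the context, fix distinct integers $r,s$ with $0\le r,s\le d$. The following are equivalent: (i) in $\Delta$, vertex $r$ is adjacent to vertex $s$ and to no other vertex; (ii) there exists $\kappa\in\mathbb F$ such that $(A^*-\kappa I)E_rV=E_sV$. Moreover, if (i) and (ii) hold then $\kappa=a^*_r$.
   Context: Let $\mathbb F$ be a field, $d\ge1$ an integer, $V$ a vector space over $\mathbb F$ of dimension $d+1$, $\mathcal A=\mathrm{End}(V)$ with identity $I$. Let $E^*_0,\dots,E^*_d\in\mathcal A$ satisfy $E^*_iE^*_j=\delta_{i,j}E^*_i$ and $\mathrm{rank}(E^*_i)=1$ for $0\le i,j\le d$. Let $A\in\mathcal A$ satisfy $E^*_iAE^*_j=0$ if $|i-j|>1$ and $E^*_iAE^*_j\neq0$ if $|i-j|=1$. Assume $A$ has $d+1$ mutually distinct eigenvalues $\theta_0,\dots,\theta_d$ in $\mathbb F$, and let $E_i=\prod_{j\ne i}\frac{A-\theta_jI}{\theta_i-\theta_j}$ be the primitive idempotent of $A$ for $\theta_i$. Let $\theta^*_0,\dots,\theta^*_d\in\mathbb F$ and $A^*=\sum_{i=0}^d\theta^*_iE^*_i$. Define $a^*_i=\mathrm{tr}(E_iA^* )$. Let $\Delta$ be the graph on vertex set $\{0,\dots,d\}$ in which $i,j$ are adjacent iff $i\ne j$ and $E_iA^*E_j\ne0$. *)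

(* V = column vectors 'cV[F]_(d.+1), End(V) = 'M[F]_(d.+1). *)
From HB Require Import structures.
From mathcomp Require Import all_boot all_order all_algebra.
Set Implicit Arguments. Unset Strict Implicit. Unset Printing Implicit Defensive.
Import Order.TTheory GRing.Theory Num.Theory.
Local Open Scope ring_scope.

Definition prim_idem (F : fieldType) (d : nat) (A : 'M[F]_(d.+1))
  (theta : 'I_(d.+1) -> F) (i : 'I_(d.+1)) : 'M[F]_(d.+1) :=
  \prod_(j < d.+1 | j != i) ((theta i - theta j)^-1 *: (A - (theta j)%:M)).

Definition dual_op (F : fieldType) (d : nat) (Es : 'I_(d.+1) -> 'M[F]_(d.+1))
  (thetas : 'I_(d.+1) -> F) : 'M[F]_(d.+1) :=
  \sum_(i < d.+1) thetas i *: Es i.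

Definition Delta_adj (F : fieldType) (d : nat) (A Astar : 'M[F]_(d.+1))
  (theta : 'I_(d.+1) -> F) (i j : 'I_(d.+1)) : bool :=
  (i != j) && (prim_idem A theta i *m Astar *m prim_idem A theta j != 0).

Definition astar (F : fieldType) (d : nat) (A Astar : 'M[F]_(d.+1))
  (theta : 'I_(d.+1) -> F) (i : 'I_(d.+1)) : F :=
  \tr (prim_idem A theta i *m Astar).

(* condition (ii) for a given kappa: (Astar - kappa I) E_r V = E_s V,
   where the image (column space) of M is the row space of M^T. *)
Definition cond_ii (F : fieldType) (d : nat) (A Astar : 'M[F]_(d.+1))
  (theta : 'I_(d.+1) -> F) (r s : 'I_(d.+1)) (kappa : F) : bool :=
  ((((Astar - kappa%:M) *m prim_idem A theta r)^T
     == (prim_idem A theta s)^T)%MS).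

From HB Require Import structures.
From mathcomp Require Import all_boot all_order all_algebra zify.
Import Order.TTheory GRing.Theory Num.Theory.
Local Open Scope ring_scope.

Set Implicit Arguments. Unset Strict Implicit. Unset Printing Implicit Defensive.

(* The primitive idempotents E_i are the Lagrange polynomials of A at its
   d+1 distinct eigenvalues; they are nonzero orthogonal idempotents, hence
   of rank one, and they resolve the identity.  For such a family, the
   equation (X - kappa) E_r V = E_s V says exactly that the column E_r of X
   is nonzero in the block s, vanishes in all blocks other than r and s, and
   has diagonal entry kappa = tr(E_r X) (lemma shift_maps_block_onto).
   Condition (i), however, concerns the ROW E_r of A*.  Rows and columns are
   related by the symmetry of Delta: writing E*_k = u_k w_k, the matrix of A
   in the basis (u_k) is irreducible tridiagonal, so a diagonal rescaling
   gives a nondegenerate bilinear form K for which A and every E*_k -- hence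
   every E_i and A* -- are self-adjoint (symmetrizer_exists); then
   E_i A* E_j = 0 iff E_j A* E_i = 0 (self_adjoint_reverse). *)

Section RankOneIdempotents.
Variable F : fieldType.

Lemma rank1_idem_factor n (E : 'M[F]_n) : E *m E = E -> \rank E = 1%N ->
  exists u : 'cV[F]_n, exists w : 'rV[F]_n, E = u *m w /\ w *m u = 1%:M.
Proof.
move=> idemE rankE.
have [u [w defE]] : exists (u : 'cV[F]_n) (w : 'rV[F]_n), E = u *m w.
  have := mulmx_base E; move: (col_base E) (row_base E).
  by rewrite rankE => c r <-; exists c, r.
exists u, w; split => //.
have E_nz : E != 0 by rewrite -mxrank_eq0 rankE.
have EE : E *m E = (w *m u) 0 0 *: E.
  by rewrite defE mulmxA -(mulmxA u) {1}[w *m u]mx11_scalar mul_mx_scalar -scalemxAl.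
have : ((w *m u) 0 0 - 1) *: E = 0 by rewrite scalerBl scale1r -EE idemE subrr.
move/eqP; rewrite scaler_eq0 (negbTE E_nz) orbF subr_eq0 => /eqP wu1.
by rewrite [w *m u]mx11_scalar wu1.
Qed.

Lemma rank1_sandwich n (E X : 'M[F]_n) : E *m E = E -> \rank E = 1%N ->
  E *m X *m E = \tr (E *m X) *: E.
Proof.
move=> idemE rankE; have [u [w [defE _]]] := rank1_idem_factor idemE rankE.
have -> : E *m X *m E = u *m (w *m X *m u) *m w by rewrite defE !mulmxA.
have -> : \tr (E *m X) = \tr (w *m X *m u) by rewrite defE -mulmxA mxtrace_mulC.
rewrite {1}[w *m X *m u]mx11_scalar mul_mx_scalar -scalemxAl -defE.
by rewrite {2}[w *m X *m u]mx11_scalar mxtrace_scalar.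
Qed.

End RankOneIdempotents.

Lemma image_sub_idem (F : fieldType) m n (E : 'M[F]_n) (M : 'M[F]_(n, m)) :
  E *m E = E -> (M^T <= E^T)%MS = (E *m M == M).
Proof.
move=> idemE; apply/idP/eqP => [/submxP [D defMT] | <-].
  by rewrite -[M]trmxK defMT trmx_mul trmxK mulmxA idemE.
by rewrite trmx_mul submxMl.
Qed.

Lemma rank_add_orth (F : fieldType) n (X Y : 'M[F]_n) :
  X *m X = X -> X *m Y = 0 -> Y *m X = 0 ->
  (\rank X + \rank Y <= \rank (X + Y)%R)%N.
Proof.
move=> XX XY YX.
have capXY : (X :&: Y)%MS = 0.
  have [D defX] := submxP (capmxSl X Y); have [D' defY] := submxP (capmxSr X Y).
  have : (X :&: Y)%MS *m X = (X :&: Y)%MS by rewrite defX -mulmxA XX.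
  by rewrite {1}defY -mulmxA YX mulmx0 => <-.
rewrite -mxrank_sum_cap capXY mxrank0 addn0; apply: mxrankS.
have projX : X *m (X + Y) = X by rewrite mulmxDr XX XY addr0.
have projY : (1%:M - X) *m (X + Y) = Y.
  by rewrite mulmxBl !mulmxDr !mul1mx XX XY addr0 addrC addKr.
rewrite addsmx_sub; apply/andP; split.
  by rewrite -{1}projX; apply: submxMl.
by rewrite -{1}projY; apply: submxMl.
Qed.

Section OrthogonalIdempotents.
Variables (F : fieldType) (I : finType) (n : nat) (E : I -> 'M[F]_n).
Hypothesis E_orth : forall i j, E i *m E j = if i == j then E i else 0.

Lemma orth_idem (i : I) : E i *m E i = E i.
Proof. by rewrite E_orth eqxx. Qed.

Lemma sum_rank_orth_idem : (\sum_i \rank (E i) <= \rank (\sum_i E i)%R)%N.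
Proof.
have : uniq (index_enum I) by apply: index_enum_uniq.
elim: (index_enum I) => [|i s IH]; first by rewrite !big_nil.
rewrite /= => /andP [i_notin_s uniq_s]; rewrite !big_cons.
have orth_s j : j \in s -> (i == j) = false.
  by move=> js; apply: contraNF i_notin_s => /eqP ->.
apply: leq_trans (rank_add_orth (orth_idem i) _ _); first by rewrite leq_add2l IH.
- by rewrite mulmx_sumr big1_seq // => j /andP [_ /orth_s]; rewrite E_orth => ->.
- by rewrite mulmx_suml big1_seq // => j /andP [_ /orth_s]; rewrite E_orth eq_sym => ->.
Qed.

Lemma orth_idem_sum1 : (\sum_i \rank (E i))%N = n -> \sum_i E i = 1%:M.
Proof.
move=> rank_sum; set S := \sum_i E i.
have S_unit : S \in unitmx.
  rewrite -row_full_unit /row_full eqn_leq rank_leq_col -{1}rank_sum.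
  exact: sum_rank_orth_idem.
have SE j : S *m E j = E j.
  rewrite /S mulmx_suml (bigD1 j) //= orth_idem big1 ?addr0 // => i /negbTE ij.
  by rewrite E_orth ij.
have SS : S *m S = S *m 1%:M.
  by rewrite mulmx1 {2}/S mulmx_sumr; under eq_bigr do rewrite SE.
by have := congr1 (mulmx (invmx S)) SS; rewrite !mulKmx.
Qed.

Lemma orth_idem_rank1 : #|I| = n -> (forall i, E i != 0) -> forall i, \rank (E i) = 1%N.
Proof.
move=> card_I E_nz i.
have rank_ge1 j : (1 <= \rank (E j))%N by rewrite lt0n mxrank_eq0.
have : (\sum_j \rank (E j) <= \sum_(j : I) 1)%N.
  by rewrite sum1_card card_I (leq_trans sum_rank_orth_idem) ?rank_leq_row.
rewrite (bigD1 i) //= [X in (_ <= X)%N](bigD1 i) //=.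
have : (\sum_(j | j != i) 1 <= \sum_(j | j != i) \rank (E j))%N.
  by apply: leq_sum => j _; apply: rank_ge1.
have := rank_ge1 i; lia.
Qed.

Hypothesis E_sum1 : \sum_i E i = 1%:M.

Lemma sum_block_decomp m (M : 'M[F]_(n, m)) : M = \sum_i E i *m M.
Proof. by rewrite -mulmx_suml E_sum1 mul1mx. Qed.

Lemma image_sub_block m (M : 'M[F]_(n, m)) s :
  (M^T <= (E s)^T)%MS <-> (forall t, t != s -> E t *m M = 0).
Proof.
rewrite image_sub_idem ?orth_idem //; split => [/eqP <- t ts | kill].
  by rewrite mulmxA E_orth (negbTE ts) mul0mx.
by rewrite {2}[M]sum_block_decomp (bigD1 s) //= big1 ?addr0.
Qed.

Lemma image_eq_block m (M : 'M[F]_(n, m)) s : \rank (E s) = 1%N ->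
  (M^T == (E s)^T)%MS <-> (M^T <= (E s)^T)%MS /\ M != 0.
Proof.
move=> rank_s; split => [/andP [sub sup] | [sub M_nz]].
  split=> //; apply: contraTneq (mxrankS sup) => ->.
  by rewrite trmx0 mxrank0 mxrank_tr rank_s.
rewrite -(mxrank_leqif_eq sub).2 !mxrank_tr rank_s eqn_leq.
have -> : (\rank M <= 1)%N.
  by rewrite -rank_s -mxrank_tr -[X in (_ <= X)%N]mxrank_tr mxrankS.
by rewrite lt0n mxrank_eq0.
Qed.

Lemma shift_maps_block_onto (X : 'M[F]_n) r s kappa :
  \rank (E r) = 1%N -> \rank (E s) = 1%N -> r != s ->
  (((X - kappa%:M) *m E r)^T == (E s)^T)%MS <->
  [/\ E s *m X *m E r != 0,
      forall t, t != r -> t != s -> E t *m X *m E r = 0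
    & kappa = \tr (E r *m X)].
Proof.
move=> rank_r rank_s rs; set M := (X - kappa%:M) *m E r.
have blockM t : E t *m M = E t *m X *m E r - kappa *: (E t *m E r).
  by rewrite /M mulmxA mulmxBr mul_mx_scalar mulmxBl -scalemxAl.
have E_r_nz : E r != 0 by rewrite -mxrank_eq0 rank_r.
have diag_r : E r *m M = 0 <-> kappa = \tr (E r *m X).
  rewrite blockM orth_idem (rank1_sandwich _ (orth_idem r) rank_r) -scalerBl.
  split=> [/eqP | ->]; last by rewrite subrr scale0r.
  by rewrite scaler_eq0 (negbTE E_r_nz) orbF subr_eq0 => /eqP.
have block_s : E s *m M = E s *m X *m E r.
  by rewrite blockM E_orth eq_sym (negbTE rs) scaler0 subr0.
have block_t t : t != r -> E t *m M = E t *m X *m E r.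
  by move=> tr; rewrite blockM E_orth (negbTE tr) scaler0 subr0.
rewrite image_eq_block // image_sub_block.
split=> [[kill M_nz] | [sr_nz others kappaE]]; last first.
  split=> [t ts|]; last by apply: contraNneq sr_nz => M0; rewrite -block_s M0 mulmx0.
  case: (eqVneq t r) => [->|tr]; first exact/diag_r.
  by rewrite block_t ?others.
have Ms_nz : E s *m M != 0.
  apply: contraNneq M_nz => Es0; apply/eqP.
  rewrite [M]sum_block_decomp big1 // => t _; by case: (eqVneq t s) => [->|/kill].
split; first by rewrite -block_s.
  by move=> t tr ts; rewrite -block_t ?kill.
by apply/diag_r; apply: kill.
Qed.

End OrthogonalIdempotents.

Lemma horner_mx_left_eigen (F : fieldType) m n (A : 'M[F]_n.+1)
    (M : 'M[F]_(m, n.+1)) a :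
  M *m A = a *: M -> forall q, M *m horner_mx A q = q.[a] *: M.
Proof.
move=> MA; elim/poly_ind => [|q b IH].
  by rewrite rmorph0 mulmx0 horner0 scale0r.
rewrite rmorphD rmorphM /= horner_mx_X horner_mx_C -mulmxE mulmxDr mulmxA IH.
by rewrite -scalemxAl MA scalerA mul_mx_scalar hornerMXaddC scalerDl mulrC.
Qed.

Section PrimitiveIdempotents.
Variables (F : fieldType) (d : nat) (A : 'M[F]_(d.+1)) (theta : 'I_(d.+1) -> F).
Hypothesis theta_inj : injective theta.
Hypothesis theta_eig : forall i, eigenvalue A (theta i).

Definition lagrange_poly i : {poly F} :=
  \prod_(j < d.+1 | j != i) ((theta i - theta j)^-1 *: ('X - (theta j)%:P)).

Lemma prim_idem_lagrange i : prim_idem A theta i = horner_mx A (lagrange_poly i).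
Proof.
rewrite /lagrange_poly rmorph_prod; apply: eq_bigr => j _; apply: esym.
transitivity (horner_mx A ((theta i - theta j)^-1 *: ('X - (theta j)%:P))) => //.
by rewrite horner_mxZ rmorphB /= horner_mx_X horner_mx_C.
Qed.

Lemma lagrange_eval i k : (lagrange_poly i).[theta k] = (i == k)%:R.
Proof.
rewrite /lagrange_poly horner_prod; have [<-|ik] := eqVneq i k.
  rewrite big1 // => j ji; rewrite hornerZ hornerXsubC mulVf // subr_eq0.
  by apply: contra ji => /eqP /theta_inj ->.
by rewrite (bigD1 k) 1?eq_sym //= hornerZ hornerXsubC subrr mulr0 mul0r.
Qed.

Lemma char_poly_nodes : char_poly A = \prod_(j < d.+1) ('X - (theta j)%:P).
Proof.
have -> : \prod_(j < d.+1) ('X - (theta j)%:P) =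
          \prod_(z <- map theta (index_enum 'I_(d.+1))) ('X - z%:P) by rewrite big_map.
have size_nodes : size (map theta (index_enum 'I_(d.+1))) = d.+1.
  by rewrite size_map [index_enum _]unlock -enumT -cardT card_ord.
apply/eqP; rewrite eq_sym -eqp_monic ?char_poly_monic ?monic_prod_XsubC //.
rewrite -dvdp_size_eqp ?size_prod_XsubC ?size_nodes ?size_char_poly //.
apply: uniq_roots_dvdp; last by rewrite uniq_rootsE map_inj_uniq ?index_enum_uniq.
by apply/allP => _ /mapP [j _ ->]; rewrite -eigenvalue_root_char.
Qed.

(* E_i is a left eigen-matrix of A for theta i, since (x - theta i) L_i(x)
   is a multiple of the characteristic polynomial (Cayley-Hamilton). *)
Lemma prim_idem_left_eigen i :
  prim_idem A theta i *m A = theta i *: prim_idem A theta i.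
Proof.
have annihil : lagrange_poly i * ('X - (theta i)%:P) =
    (\prod_(j < d.+1 | j != i) (theta i - theta j)^-1) *: char_poly A.
  rewrite char_poly_nodes [X in _ *: X](bigD1 i) //= /lagrange_poly.
  by rewrite scaler_prod -scalerAl mulrC.
move/(congr1 (horner_mx A)): annihil; rewrite horner_mxZ Cayley_Hamilton scaler0.
rewrite rmorphM rmorphB /= horner_mx_X horner_mx_C -prim_idem_lagrange -mulmxE.
by rewrite mulmxBr mul_mx_scalar => /eqP; rewrite subr_eq0 => /eqP.
Qed.

(* E_i E_j = L_j(theta i) E_i, which is E_i or 0. *)
Lemma prim_idem_orth i j : prim_idem A theta i *m prim_idem A theta j =
  if i == j then prim_idem A theta i else 0.
Proof.
rewrite [prim_idem A theta j]prim_idem_lagrange.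
rewrite (horner_mx_left_eigen (prim_idem_left_eigen i)) lagrange_eval eq_sym.
by case: eqVneq; rewrite ?scale1r ?scale0r.
Qed.

(* A left eigenvector v for theta i satisfies v E_i = v. *)
Lemma prim_idem_neq0 i : prim_idem A theta i != 0.
Proof.
have [v vA v_nz] := eigenvalueP (theta_eig i); apply: contraNneq v_nz => E0.
apply/eqP; have := horner_mx_left_eigen vA (lagrange_poly i).
by rewrite -prim_idem_lagrange E0 mulmx0 lagrange_eval eqxx scale1r.
Qed.

Lemma prim_idem_rank i : \rank (prim_idem A theta i) = 1%N.
Proof.
by apply: (orth_idem_rank1 prim_idem_orth _ prim_idem_neq0); rewrite card_ord.
Qed.

Lemma prim_idem_sum1 : \sum_i prim_idem A theta i = 1%:M.
Proof.
apply: orth_idem_sum1 prim_idem_orth _.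
by rewrite (eq_bigr (fun=> 1%N)) ?sum1_card ?card_ord // => i _; apply: prim_idem_rank.
Qed.

End PrimitiveIdempotents.

(* X is self-adjoint for the bilinear form (x, y) |-> x^T K y. *)
Definition self_adjoint (F : fieldType) n (K X : 'M[F]_n) : Prop :=
  X^T *m K = K *m X.

Section SelfAdjoint.
Variables (F : fieldType) (n : nat) (K : 'M[F]_n).

Lemma self_adjoint_lincomb (I : finType) (c : I -> F) (X : I -> 'M[F]_n) :
  (forall i, self_adjoint K (X i)) -> self_adjoint K (\sum_i c i *: X i).
Proof.
move=> adjX; rewrite /self_adjoint linear_sum mulmx_suml mulmx_sumr.
by apply: eq_bigr => i _; rewrite linearZ /= -scalemxAl -scalemxAr adjX.
Qed.

(* For a nondegenerate form, the product X Y Z of self-adjoint matrices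
   vanishes only if the reversed product Z Y X does (Z Y X is its adjoint). *)
Lemma self_adjoint_reverse (X Y Z : 'M[F]_n) : K \in unitmx ->
  self_adjoint K X -> self_adjoint K Y -> self_adjoint K Z ->
  X *m Y *m Z = 0 -> Z *m Y *m X = 0.
Proof.
move=> K_unit adjX adjY adjZ XYZ0.
have : (X *m Y *m Z)^T *m K = K *m (Z *m Y *m X).
  rewrite !trmx_mul -!mulmxA adjX (mulmxA Y^T) adjY -(mulmxA K) (mulmxA Z^T) adjZ.
  by rewrite !mulmxA.
by rewrite XYZ0 trmx0 mul0mx => /(congr1 (mulmx (invmx K))); rewrite mulmx0 mulKmx.
Qed.

End SelfAdjoint.

Lemma self_adjoint_horner (F : fieldType) n (K A : 'M[F]_n.+1) q :
  self_adjoint K A -> self_adjoint K (horner_mx A q).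
Proof.
move=> adjA; have commA p : horner_mx A p *m A = A *m horner_mx A p.
  by have := congr1 (horner_mx A) (mulrC p 'X); rewrite !rmorphM /= horner_mx_X.
elim/poly_ind: q => [|q c IH].
  by rewrite /self_adjoint rmorph0 trmx0 mul0mx mulmx0.
rewrite /self_adjoint rmorphD rmorphM /= horner_mx_X horner_mx_C -mulmxE.
rewrite linearD /= trmx_mul tr_scalar_mx mulmxDl -mulmxA IH mulmxA adjA.
by rewrite -mulmxA -commA mulmxDr mulmxA mul_scalar_mx mul_mx_scalar.
Qed.

Section Symmetrizer.
Variables (F : fieldType) (d : nat).
Variables (Es : 'I_(d.+1) -> 'M[F]_(d.+1)) (A : 'M[F]_(d.+1)).
Hypothesis Es_orth : forall i j, Es i *m Es j = if i == j then Es i else 0.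
Hypothesis Es_rank : forall i, \rank (Es i) = 1%N.
Hypothesis A_far : forall i j : 'I_(d.+1),
  ((i.+1 < j)%N || (j.+1 < i)%N) -> Es i *m A *m Es j = 0.
Hypothesis A_near : forall i j : 'I_(d.+1),
  ((i.+1 == j) || (j.+1 == i)) -> Es i *m A *m Es j != 0.

Lemma Es_sum1 : \sum_i Es i = 1%:M.
Proof.
apply: orth_idem_sum1 Es_orth _.
by rewrite (eq_bigr (fun=> 1%N)) ?sum1_card ?card_ord.
Qed.

(* Writing Es k = u k w k, the columns u k form a basis with dual basis w k. *)
Section DualBases.
Variables (u : 'I_(d.+1) -> 'cV[F]_(d.+1)) (w : 'I_(d.+1) -> 'rV[F]_(d.+1)).
Hypothesis Es_uw : forall k, Es k = u k *m w k.
Hypothesis wu1 : forall k, w k *m u k = 1%:M.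

Lemma w_Es i : w i *m Es i = w i.
Proof. by rewrite Es_uw mulmxA wu1 mul1mx. Qed.

Lemma Es_u i : Es i *m u i = u i.
Proof. by rewrite Es_uw -mulmxA wu1 mulmx1. Qed.

Lemma dual_bases i j : w i *m u j = if i == j then 1%:M else 0.
Proof.
have [<-|ij] := eqVneq i j; first exact: wu1.
by rewrite -w_Es -Es_u mulmxA -(mulmxA (w i)) Es_orth (negbTE ij) mulmx0 mul0mx.
Qed.

(* The entries of A in the basis u; this matrix is irreducible tridiagonal. *)
Definition coef i j : F := (w i *m A *m u j) 0 0.

Lemma A_block i j : Es i *m A *m Es j = coef i j *: (u i *m w j).
Proof.
rewrite !Es_uw !mulmxA -(mulmxA (u i)) -(mulmxA (u i)) -(mulmxA (w i)) /coef.
by rewrite {1}[w i *m (A *m u j)]mx11_scalar mul_mx_scalar -scalemxAl mulmxA.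
Qed.

Lemma A_expand : A = \sum_i \sum_j coef i j *: (u i *m w j).
Proof.
transitivity ((\sum_i Es i) *m A *m (\sum_j Es j)).
  by rewrite Es_sum1 mul1mx mulmx1.
rewrite !mulmx_suml; apply: eq_bigr => i _.
by rewrite mulmx_sumr; apply: eq_bigr => j _; rewrite A_block.
Qed.

Lemma coef_far (i j : 'I_(d.+1)) : ((i.+1 < j)%N || (j.+1 < i)%N) -> coef i j = 0.
Proof.
move=> far; rewrite /coef -w_Es -Es_u.
have -> : w i *m Es i *m A *m (Es j *m u j) = w i *m (Es i *m A *m Es j) *m u j.
  by rewrite !mulmxA.
by rewrite A_far // mulmx0 mul0mx mxE.
Qed.

Lemma coef_near (i j : 'I_(d.+1)) : ((i.+1 == j) || (j.+1 == i)) -> coef i j != 0.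
Proof.
by move=> near; apply: contra (A_near near) => /eqP c0; rewrite A_block c0 scale0r.
Qed.

(* Weights balancing the tridiagonal matrix: weight i * coef i j is
   symmetric in i and j, as the recursion arranges for j = i + 1. *)
Fixpoint weight (k : nat) : F :=
  if k is k'.+1 then
    weight k' * coef (inord k') (inord k'.+1) / coef (inord k'.+1) (inord k')
  else 1.

Lemma weight_neq0 (k : 'I_(d.+1)) : weight k != 0.
Proof.
case: k => k /=; elim: k => [|k IH] lt_k /=; first exact: oner_neq0.
have lt_k' : (k < d.+1)%N by lia.
by rewrite !mulf_neq0 ?invr_neq0 ?IH // coef_near // !inordK // eqxx ?orbT.
Qed.

Lemma weight_step (i j : 'I_(d.+1)) : j = i.+1 :> nat ->
  weight j * coef j i = weight i * coef i j.
Proof.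
move=> ji; have ej : j = inord i.+1 by apply: val_inj; rewrite /= inordK -?ji.
rewrite ji /= inord_val -ej divfK // coef_near //.
by rewrite ji eqxx orbT.
Qed.

Lemma weight_balance (i j : 'I_(d.+1)) :
  weight i * coef i j = weight j * coef j i.
Proof.
have [far|] := boolP ((i.+1 < j)%N || (j.+1 < i)%N).
  have far' : ((j.+1 < i)%N || (i.+1 < j)%N) by rewrite orbC.
  by rewrite (coef_far far) (coef_far far') !mulr0.
rewrite negb_or -!leqNgt => /andP [le_j le_i].
case: (ltngtP i j) => [ij|ji|/val_inj -> //].
  by rewrite (weight_step (i := i) (j := j)) //; lia.
by rewrite (weight_step (i := j) (j := i)) //; lia.
Qed.

Definition form : 'M[F]_(d.+1) :=
  \sum_(k < d.+1) weight k *: ((w k)^T *m w k).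

Lemma form_u j : form *m u j = weight j *: (w j)^T.
Proof.
rewrite /form mulmx_suml (bigD1 j) //= big1 ?addr0 => [|i /negbTE ij].
  by rewrite -scalemxAl -mulmxA dual_bases eqxx mulmx1.
by rewrite -scalemxAl -mulmxA dual_bases ij mulmx0 scaler0.
Qed.

Lemma form_sym : form^T = form.
Proof.
by rewrite linear_sum; apply: eq_bigr => k _; rewrite linearZ /= trmx_mul trmxK.
Qed.

Lemma uT_form j : (u j)^T *m form = weight j *: w j.
Proof. by rewrite -{1}form_sym -trmx_mul form_u linearZ /= trmxK. Qed.

Lemma form_Es k : self_adjoint form (Es k).
Proof.
rewrite /self_adjoint Es_uw trmx_mul -mulmxA uT_form mulmxA form_u.
by rewrite -scalemxAr -scalemxAl.
Qed.

Lemma form_A : self_adjoint form A.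
Proof.
rewrite /self_adjoint {2}A_expand {1}A_expand [X in X *m _]linear_sum.
rewrite mulmx_suml mulmx_sumr.
transitivity (\sum_(i < d.+1) \sum_(j < d.+1)
                (weight i * coef i j) *: ((w j)^T *m w i)).
  apply: eq_bigr => i _; rewrite [X in X *m _]linear_sum mulmx_suml.
  apply: eq_bigr => j _.
  by rewrite linearZ /= trmx_mul -scalemxAl -mulmxA uT_form -scalemxAr scalerA mulrC.
rewrite exchange_big /=; apply: eq_bigr => i _.
rewrite mulmx_sumr; apply: eq_bigr => j _.
by rewrite -scalemxAr mulmxA form_u -scalemxAl scalerA -weight_balance mulrC.
Qed.

Lemma form_unit : form \in unitmx.
Proof.
suff: form *m \sum_(j < d.+1) (weight j)^-1 *: (u j *m (u j)^T) = 1%:M.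
  by case/mulmx1_unit.
rewrite mulmx_sumr -[1%:M]trmx1 -Es_sum1 [in RHS]linear_sum; apply: eq_bigr => j _.
rewrite -scalemxAr mulmxA form_u -scalemxAl scalerA mulVf ?weight_neq0 //.
by rewrite scale1r Es_uw -trmx_mul.
Qed.

End DualBases.

Lemma symmetrizer_exists : exists2 K : 'M[F]_(d.+1),
  K \in unitmx & self_adjoint K A /\ forall k, self_adjoint K (Es k).
Proof.
have factor k : exists x : 'cV[F]_(d.+1) * 'rV[F]_(d.+1),
    Es k = x.1 *m x.2 /\ x.2 *m x.1 = 1%:M.
  have [u [w uw]] := rank1_idem_factor (orth_idem Es_orth k) (Es_rank k).
  by exists (u, w).
have [uw Es_uw] := fin_all_exists factor.
pose u k := (uw k).1; pose w k := (uw k).2.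
have Es_factor k : Es k = u k *m w k by case: (Es_uw k).
have wu1 k : w k *m u k = 1%:M by case: (Es_uw k).
exists (form u w); first exact: form_unit Es_factor wu1.
by split; [apply: form_A | apply: form_Es].
Qed.

End Symmetrizer.

Lemma sole_neighbour_iff (F : fieldType) n (I : finType) (E : I -> 'M[F]_n)
    (X : 'M[F]_n) r s :
  (forall i j, E i *m X *m E j = 0 -> E j *m X *m E i = 0) -> r != s ->
  (r != s) && (E r *m X *m E s != 0) /\
    (forall t, (r != t) && (E r *m X *m E t != 0) -> t = s) <->
  E s *m X *m E r != 0 /\ (forall t, t != r -> t != s -> E t *m X *m E r = 0).
Proof.
move=> flip rs; split=> [[/andP [_ rs_nz] only_s] | [sr_nz others]].
  split; first by apply: contraNneq rs_nz => /flip ->.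
  move=> t tr ts; apply: flip; apply/eqP; apply: contraNT ts => rt_nz.
  by apply/eqP/only_s; rewrite eq_sym tr.
split; first by rewrite rs; apply: contraNneq sr_nz => /flip ->.
move=> t /andP [rt rt_nz]; apply/eqP; apply: contraNT rt_nz => ts.
by apply/eqP/flip/others; rewrite // eq_sym.
Qed.

Theorem lemma6p3 (F : fieldType) (d : nat) (hd : (0 < d)%N)
  (Es : 'I_(d.+1) -> 'M[F]_(d.+1)) (A : 'M[F]_(d.+1))
  (theta thetas : 'I_(d.+1) -> F) (r s : 'I_(d.+1))
  (hEs_idem : forall i j : 'I_(d.+1),
     Es i *m Es j = (if i == j then Es i else 0))
  (hEs_rank : forall i, \rank (Es i) = 1%N)
  (hA_far : forall i j : 'I_(d.+1), ((i.+1 < j)%N || (j.+1 < i)%N) ->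
     Es i *m A *m Es j = 0)
  (hA_near : forall i j : 'I_(d.+1), ((i.+1 == j) || (j.+1 == i)) ->
     Es i *m A *m Es j != 0)
  (htheta_inj : injective theta)
  (htheta_eig : forall i, eigenvalue A (theta i))
  (hrs : r != s) :
  let Astar := dual_op Es thetas in
  ((Delta_adj A Astar theta r s /\
      (forall t, Delta_adj A Astar theta r t -> t = s))
   <-> (exists kappa : F, cond_ii A Astar theta r s kappa))
  /\
  (forall kappa : F,
     (Delta_adj A Astar theta r s /\
        (forall t, Delta_adj A Astar theta r t -> t = s)) ->
     cond_ii A Astar theta r s kappa ->
     kappa = astar A Astar theta r).
Proof.
move=> Astar; set E := prim_idem A theta.
have E_orth := prim_idem_orth htheta_inj htheta_eig.
have E_rank := prim_idem_rank htheta_inj htheta_eig.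
have E_sum1 := prim_idem_sum1 htheta_inj htheta_eig.
(* Symmetry of Delta: E_i Astar E_j = 0 iff E_j Astar E_i = 0. *)
have [K K_unit [adjA adjEs]] :=
  symmetrizer_exists hEs_idem hEs_rank hA_far hA_near.
have adjE i : self_adjoint K (E i).
  by rewrite /E prim_idem_lagrange; apply: self_adjoint_horner.
have adjAstar : self_adjoint K Astar by apply: self_adjoint_lincomb.
have flip i j : E i *m Astar *m E j = 0 -> E j *m Astar *m E i = 0.
  exact: self_adjoint_reverse K_unit (adjE i) adjAstar (adjE j).
have adj_iff := sole_neighbour_iff flip hrs.
have cond_iff kappa := shift_maps_block_onto E_orth E_sum1 Astar kappa
  (E_rank r) (E_rank s) hrs.
split; last by move=> kappa _ /cond_iff [].
apply: iff_trans adj_iff _; split=> [[sr_nz others] | [kappa /cond_iff []//]].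
by exists (astar A Astar theta r); apply/cond_iff.
Qed.
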